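(* Let $T$ be a text of length $n$ with suffix tree $\mathcal T$, and let $d=\lceil\log_2 n\rceil$. The total number of heavy Weiner links whose source is a w-special node of $\mathcal T$ is $O(n/d)$.
   Context: For a node $v$ of the suffix tree $\mathcal T$ whose root-to-node path spells the string $p$, and a symbol $c$ such that $cp$ occurs in $T$, the Weiner link $\mathrm{wlink}(v,c)$ goes from $v$ (its source) to the locus $u$ of $cp$ in $\mathcal T$ (the highest node whose path label has $cp$ as a prefix); $c$ is its label. A Weiner link is heavy if its target node has at least $d$ leaf descendants, and light otherwise. A node $v$ is w-special if at least two heavy Weiner links have $v$ as source. *)

(* Suffix trees are represented, as usual, by the path labels
   of their nodes: a node is identified with the string spelled on the
   root-to-node path. *)
From mathcomp Require Import all_boot.
Set Implicit Arguments. Unset Strict Implicit. Unset Printing Implicit Defensive.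

Section SuffixTree.
Variable A : eqType.
Implicit Types (T p q u v : seq A) (c : A).

Definition terminated T : bool :=
  if T is x :: s then count_mem (last x s) T == 1 else false.

Definition substrs T : seq (seq A) :=
  undup [seq take k (drop i T) | i <- iota 0 (size T).+1, k <- iota 0 (size T).+1].

Definition right_maximal T p : bool :=
  has (fun a => has (fun b => (a != b) && infix (rcons p a) T && infix (rcons p b) T) T) T.

(* Explicit nodes of the suffix tree of T (T terminated): the root (empty
   string), the branching nodes (right-maximal substrings) and the leaves
   (the suffixes of T). *)
Definition st_node T p : bool :=
  infix p T && [|| p == [::], suffix p T | right_maximal T p].

(* Tree structure: v is a descendant of u iff the label of u is a prefix of
   the label of v.  A leaf is a node with no proper descendant node. *)
Definition st_leaf T v : bool :=
  st_node T v && ~~ has (fun w => st_node T w && (w != v) && prefix v w) (substrs T).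

Definition leaf_count T u : nat :=
  count (fun v => st_leaf T v && prefix u v) (substrs T).

Definition locus T q : seq A :=
  head q (sort (fun x y => size x <= size y)
               [seq u <- substrs T | st_node T u && prefix q u]).

Definition heavy_wlink T d p c : bool :=
  st_node T p && infix (c :: p) T && (d <= leaf_count T (locus T (c :: p))).

(* Number of heavy Weiner links with source p (labels range over the symbols
   of T, the only possible labels). *)
Definition n_heavy T d p : nat := count (heavy_wlink T d p) (undup T).

Definition w_special T d p : bool := st_node T p && (1 < n_heavy T d p).

Definition heavy_links_from_wspecial T d : nat :=
  \sum_(p <- substrs T | w_special T d p) n_heavy T d p.

End SuffixTree.

(* Let occ x count the occurrences of x in T, at positions 0..n (so the empty
   string occurs n + 1 times), and call x heavy when occ x >= d.  A heavy
   Weiner link from p labelled c makes cp heavy, since the leaves below the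
   locus of cp are distinct suffixes of T starting with cp.  So it suffices to
   bound, over the strings y with at least two heavy left extensions cy, the
   total number of such extensions.  Left extension x |-> cx arranges strings
   in a tree in which the occurrences of the children of x inject into those
   of x.  In its subtree of heavy strings, the numbers of children of the
   branching nodes add up to at most twice the number of leaves, and the
   leaves carry disjoint sets of at least d occurrences each.  This gives the
   invariant  mass x * d + 2d [x heavy] <= 2 occ x,  where mass x adds up the
   numbers of heavy left extensions of the strings y ending with x that have
   at least two of them; it is proved from the long strings down, and at the
   empty string it gives the bound 2n / d. *)
From mathcomp Require Import all_boot.
From mathcomp Require Import zify.
Set Implicit Arguments. Unset Strict Implicit. Unset Printing Implicit Defensive.

Lemma sum_nat_count (I : Type) (r : seq I) (P : pred I) :
  \sum_(i <- r) (P i : nat) = count P r.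
Proof. by elim: r => [|i r IH]; rewrite ?big_nil ?big_cons //= IH. Qed.

Section Suffixes.
Variable A : eqType.
Implicit Types (s u x y : seq A) (c : A).

Fixpoint suffixes s : seq (seq A) :=
  s :: (if s is _ :: s' then suffixes s' else [::]).

Lemma suffix_consr u c s : suffix u (c :: s) = (u == c :: s) || suffix u s.
Proof.
apply/idP/orP => [/suffixP [[|b p] E] | [/eqP -> | /suffixP [p ->]]].
- by left; rewrite E cat0s.
- by right; case: E => _ ->; apply: suffix_suffix.
- exact: suffix_refl.
- by rewrite -cat_cons suffix_suffix.
Qed.

Lemma mem_suffixes s u : (u \in suffixes s) = suffix u s.
Proof.
elim: s => [|c s IH]; first by rewrite inE suffixs0.
by rewrite inE IH suffix_consr.
Qed.

Lemma suffix_cons_ext x y :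
  suffix x y -> y != x -> exists2 c, c \in y & suffix (c :: x) y.
Proof.
case/suffixP => p ->; case/lastP: p => [|p c]; first by rewrite eqxx.
by move=> _; exists c; rewrite cat_rcons ?suffix_suffix // mem_cat mem_head orbT.
Qed.

End Suffixes.

Section Occurrences.
Variables (A : eqType) (T : seq A).
Implicit Types (p q u v x y : seq A) (c : A).

Definition occ x : nat := count (prefix x) (suffixes T).

Lemma occ_nil : occ [::] = (size T).+1.
Proof. by rewrite /occ; elim: T => //= c s ->. Qed.

Lemma occ_gt0 x : 0 < occ x -> size x <= size T.
Proof.
rewrite -has_count => /hasP [s]; rewrite mem_suffixes.
by move=> /size_suffix le_sT /size_prefix le_xs; apply: leq_trans le_xs le_sT.
Qed.

(* An occurrence of cx at position i gives one of x at i + 1; the occurrence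
   of x at position 0, if any, is counted separately. *)
Lemma sum_occ_cons (s : seq A) x :
  uniq s -> \sum_(c <- s) occ (c :: x) + prefix x T <= occ x.
Proof.
rewrite /occ; elim: T => [|a r IH] uniq_s /=.
  by rewrite big1 // addn0.
have first_symbol : \sum_(c <- s) ((c == a) && prefix x r : nat) <= prefix x r.
  case: (prefix x r); last by rewrite big1 // => c _; rewrite andbF.
  rewrite sum_nat_count (@eq_count _ _ (pred1 a)) => [|c]; last by rewrite andbT.
  by rewrite count_uniq_mem ?leq_b1.
move: (IH uniq_s) first_symbol; rewrite big_split /=; lia.
Qed.

Lemma occ_cons_leq c x : occ (c :: x) <= occ x.
Proof.
have := sum_occ_cons x (isT : uniq [:: c]); rewrite big_seq1.
by apply: leq_trans; apply: leq_addr.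
Qed.

Lemma occ_suffix_leq x y : suffix x y -> occ y <= occ x.
Proof.
case/suffixP => p ->; elim: p => [|c p IH] //=.
exact: leq_trans (occ_cons_leq _ _) IH.
Qed.

Lemma mem_substrs y : (y \in substrs T) = infix y T.
Proof.
rewrite /substrs mem_undup; apply/allpairsP/idP => [[[i k] [_ _ ->]] | ].
  by apply: prefix_infix_trans (prefix_take _ _) (suffixW (suffix_drop _ _)).
case/infixP => [p [s E]]; exists (size p, size y); rewrite !mem_iota E !size_cat.
by split => /=; [lia | lia | rewrite drop_size_cat // take_size_cat].
Qed.

Lemma st_leaf_suffix v : st_leaf T v -> suffix v T.
Proof.
case/andP => /andP [_ /or3P [/eqP -> | // | rm_v]] no_desc; first exact: suffix0s.
case/hasP: rm_v => a _ /hasP [b _ /andP [/andP [_ /infixP [p [s E]]] _]].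
have suf_w : suffix (rcons v a ++ s) T by rewrite E suffix_suffix.
case/hasP: no_desc; exists (rcons v a ++ s).
  by rewrite mem_substrs suffixW.
rewrite /st_node (suffixW suf_w) suf_w orbT -cats1 -catA prefix_prefix andbT /=.
by apply/eqP => /(congr1 size); rewrite !size_cat /=; lia.
Qed.

Lemma leaf_count_leq_occ q u : prefix q u -> leaf_count T u <= occ q.
Proof.
move=> q_u; rewrite /leaf_count /occ -!size_filter.
apply: uniq_leq_size; first by rewrite filter_uniq ?undup_uniq.
move=> v; rewrite !mem_filter mem_suffixes => /andP [/andP [leaf_v u_v] _].
by rewrite (prefix_trans q_u u_v) st_leaf_suffix.
Qed.

Lemma prefix_locus q : prefix q (locus T q).
Proof.
rewrite /locus; case E: (sort _ _) => [|u l] /=; first exact: prefix_refl.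
have : u \in sort (fun x y : seq A => size x <= size y)
    [seq u <- substrs T | st_node T u && prefix q u] by rewrite E mem_head.
by rewrite mem_sort mem_filter => /andP [/andP [_ ->] _].
Qed.

Lemma heavy_wlink_occ d p c : heavy_wlink T d p c -> d <= occ (c :: p).
Proof.
case/andP => _ /leq_trans; apply; exact/leaf_count_leq_occ/prefix_locus.
Qed.

End Occurrences.

Section HeavyMass.
Variables (A : eqType) (T : seq A) (d : nat).
Implicit Types (p x y : seq A) (c : A).

Definition heavy_exts y : nat := count (fun c => d <= occ T (c :: y)) (undup T).

Definition special_mass x : nat :=
  \sum_(y <- substrs T | suffix x y && (1 < heavy_exts y)) heavy_exts y.

Lemma n_heavy_leq_exts p : n_heavy T d p <= heavy_exts p.
Proof. by apply: sub_count => c /heavy_wlink_occ. Qed.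

Lemma heavy_links_leq_mass : heavy_links_from_wspecial T d <= special_mass [::].
Proof.
rewrite /heavy_links_from_wspecial /special_mass.
rewrite big_mkcond [X in _ <= X]big_mkcond /=; apply: leq_sum => p _.
rewrite suffix0s /=; case: ifP => // /andP [_ two_links].
by rewrite (leq_trans two_links (n_heavy_leq_exts p)) n_heavy_leq_exts.
Qed.

Lemma special_mass_light x : occ T x < d -> special_mass x = 0.
Proof.
move=> light_x; rewrite /special_mass big1 // => y /andP [x_y].
apply: contraTeq => _.
rewrite -leqNgt /heavy_exts (@eq_count _ _ pred0) ?count_pred0 // => c.
apply/negbTE; rewrite -ltnNge; apply: leq_ltn_trans light_x.
exact/occ_suffix_leq/(suffix_trans x_y)/suffix_cons.
Qed.

Lemma special_mass_rec x :
  special_mass x <= (if 1 < heavy_exts x then heavy_exts x else 0)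
                    + \sum_(c <- undup T) special_mass (c :: x).
Proof.
set W := (if 1 < heavy_exts x then _ else _).
rewrite /special_mass big_mkcond /=.
under [X in _ <= _ + X]eq_bigr => c _ do rewrite big_mkcond /=.
rewrite exchange_big /=.
apply: (@leq_trans (\sum_(y <- substrs T) ((y == x) * W
    + \sum_(c <- undup T)
        (if suffix (c :: x) y && (1 < heavy_exts y) then heavy_exts y else 0)))).
  rewrite big_seq [X in _ <= X]big_seq; apply: leq_sum => y y_T.
  case: ifP => [/andP [x_y heavy_y] | _] //.
  case: (eqVneq y x) => [E | y_x]; first by rewrite mul1n /W -E heavy_y leq_addr.
  have [c c_y cx_y] := suffix_cons_ext x_y y_x.
  have c_T : c \in undup T.
    by rewrite mem_undup; apply: mem_infix c_y; rewrite -mem_substrs.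
  by rewrite (bigD1_seq c c_T (undup_uniq T)) /= cx_y heavy_y mul0n leq_addr.
rewrite big_split /= leq_add2r -big_distrl /= sum_nat_count.
by rewrite count_uniq_mem ?undup_uniq //; case: (_ \in _); rewrite ?mul1n.
Qed.

Lemma special_mass_exts0 x :
  heavy_exts x = 0 -> \sum_(c <- undup T) special_mass (c :: x) = 0.
Proof.
move/eqP; rewrite -leqn0 leqNgt -has_count => /hasPn no_heavy.
rewrite big1_seq // => c /andP [_ c_T].
by apply: special_mass_light; rewrite ltnNge no_heavy.
Qed.

Lemma special_mass_bound x :
  special_mass x * d + 2 * d * (d <= occ T x) <= 2 * occ T x.
Proof.
have [k] := ubnP ((size T).+1 - size x); elim: k x => // k IH x lt_k.
have [light | heavy] := ltnP (occ T x) d.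
  by rewrite special_mass_light // muln0.
have [occ0 | occ_pos] := posnP (occ T x).
  by move: heavy; rewrite occ0 leqn0 => /eqP ->; rewrite !muln0.
have size_x := occ_gt0 occ_pos.
have children : (\sum_(c <- undup T) special_mass (c :: x)) * d
                + 2 * d * heavy_exts x <= 2 * occ T x.
  rewrite big_distrl /heavy_exts -sum_nat_count big_distrr -big_split /=.
  apply: (@leq_trans (\sum_(c <- undup T) 2 * occ T (c :: x))).
    by apply: leq_sum => c _; apply: IH => /=; lia.
  rewrite -big_distrr leq_mul2l /=.
  exact: leq_trans (leq_addr _ _) (sum_occ_cons _ _ (undup_uniq T)).
have rec := special_mass_rec x.
case E: (heavy_exts x) rec children => [|[|h]] /= rec children.
- by move: rec; rewrite special_mass_exts0 // leqn0 => /eqP ->; lia.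
- nia.
- nia.
Qed.

End HeavyMass.

Theorem proposition4 :
  exists C : nat, forall (A : eqType) (T : seq A),
    terminated T ->
    let n := size T in
    let d := up_log 2 n in
    heavy_links_from_wspecial T d * d <= C * n.
Proof.
exists 2 => A T _ /=; set d := up_log 2 (size T).
have links_mass := heavy_links_leq_mass T d.
have [light | heavy] := ltnP (size T).+1 d.
  by move: links_mass; rewrite special_mass_light ?occ_nil // leqn0 => /eqP ->.
have [-> | d_pos] := posnP d; first by rewrite muln0.
have := special_mass_bound T d [::]; rewrite occ_nil heavy.
have := leq_mul links_mass (leqnn d); lia.
Qed.
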